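(* Let $\mathcal T_p$ be a cluster tree of depth $p$ for $n$ and let $A\in\mathbb C^{n\times n}$ be an $\epsilon$-$(\mathcal T_p,k)$-HSS matrix. Then there exists $\delta A\in\mathbb C^{n\times n}$ with $\|\delta A\|_2\le\sqrt{2^{p+2}-4}\,\epsilon$ such that $A+\delta A$ is a $(\mathcal T_p,k)$-HSS matrix.
   Context: Cluster tree associated with a partition $n=n_1+\dots+n_{2^p}$ into positive integers: the leaves $I^p_1,\dots,I^p_{2^p}$ are the consecutive index intervals of $I=\{1,\dots,n\}$ of sizes $n_1,\dots,n_{2^p}$ in order, and $I^\ell_i:=I^{\ell+1}_{2i-1}\cup I^{\ell+1}_{2i}$ for $\ell<p$, $i=1,\dots,2^\ell$. For $\ell=1,\dots,p$ and $i=1,\dots,2^\ell$, $A(I^\ell_i,I\setminus I^\ell_i)$ is an HSS block row and $A(I\setminus I^\ell_i,I^\ell_i)$ an HSS block column. $A$ is a $(\mathcal T_p,k)$-HSS matrix if every HSS block row and column has rank at most $k$, and an $\epsilon$-$(\mathcal T_p,k)$-HSS matrix if every HSS block row and column $Y$ admits a matrix $Z$ of rank at most $k$ with $\|Y-Z\|_2\le\epsilon$ (spectral norm). For $p=0$ there are no HSS block rows or columns. *)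

From HB Require Import structures.
From mathcomp Require Import all_boot all_order all_algebra.
Set Implicit Arguments. Unset Strict Implicit. Unset Printing Implicit Defensive.
Import Order.TTheory GRing.Theory Num.Theory.
Local Open Scope ring_scope.

(* A partition n = n_1 + ... + n_(2^p) into positive integers, given as the
   sequence s = [:: n_1; ...; n_(2^p)]. *)
Definition cluster_partition (n p : nat) (s : seq nat) : Prop :=
  [/\ size s = (2 ^ p)%N, all (fun m => 0 < m)%N s & sumn s = n].

Definition leaf_offset (s : seq nat) (m : nat) : nat := sumn (take m s).

(* Cluster I^l_i (0-based i < 2^l, 0-based indices 0..n-1): the union of the
   leaves i*2^(p-l), ..., (i+1)*2^(p-l)-1, i.e. a consecutive index interval. *)
Definition cluster (n p : nat) (s : seq nat) (l i : nat) : {set 'I_n} :=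
  [set x : 'I_n | (leaf_offset s (i * 2 ^ (p - l)) <= x)%N
                  && (x < leaf_offset s (i.+1 * 2 ^ (p - l)))%N].

Definition block_row (C : Type) (n : nat) (A : 'M[C]_n) (S : {set 'I_n})
  : 'M[C]_(#|S|, #|~: S|) :=
  \matrix_(i < #|S|, j < #|~: S|) A (enum_val i) (enum_val j).

Definition block_col (C : Type) (n : nat) (A : 'M[C]_n) (S : {set 'I_n})
  : 'M[C]_(#|~: S|, #|S|) :=
  \matrix_(i < #|~: S|, j < #|S|) A (enum_val i) (enum_val j).

(* ||Y||_2 <= c  (spectral norm = operator norm induced by the Euclidean norm),
   written out: c >= 0 and ||Y x||_2^2 <= c^2 ||x||_2^2 for all x. *)
Definition spec_norm_le (C : numClosedFieldType) (m q : nat)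
  (Y : 'M[C]_(m, q)) (c : C) : Prop :=
  0 <= c /\ forall x : 'cV[C]_q,
    \sum_(i < m) `|(Y *m x) i 0| ^+ 2 <= c ^+ 2 * \sum_(j < q) `|x j 0| ^+ 2.

Definition eps_rank_le (C : numClosedFieldType) (m q : nat)
  (Y : 'M[C]_(m, q)) (k : nat) (eps : C) : Prop :=
  exists Z : 'M[C]_(m, q), (\rank Z <= k)%N /\ spec_norm_le (Y - Z) eps.

Definition is_HSS (C : numClosedFieldType) (n p : nat) (s : seq nat) (k : nat)
  (A : 'M[C]_n) : Prop :=
  forall l i : nat, (1 <= l <= p)%N -> (i < 2 ^ l)%N ->
    (\rank (block_row A (cluster n p s l i)) <= k)%N /\
    (\rank (block_col A (cluster n p s l i)) <= k)%N.

Definition is_eps_HSS (C : numClosedFieldType) (n p : nat) (s : seq nat) (k : nat)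
  (eps : C) (A : 'M[C]_n) : Prop :=
  forall l i : nat, (1 <= l <= p)%N -> (i < 2 ^ l)%N ->
    eps_rank_le (block_row A (cluster n p s l i)) k eps /\
    eps_rank_le (block_col A (cluster n p s l i)) k eps.

(* Induction on the depth, finest level first.  For each leaf cluster I_j, let P_j be
   the orthogonal projector onto the column space of a rank-k approximant of the block
   row A(I_j, I \ I_j), and Q_j the analogue for the block column.  P = sum_j P_j and
   Q = sum_j Q_j are orthogonal projectors commuting with the masks of all coarser
   clusters, so P A Q is again an eps-HSS matrix for the coarser tree, and induction
   gives a correction dA' of it.  Put B = D + P (A - D + dA') Q, with D the block
   diagonal of A over the leaves.  The coarse HSS blocks of B are compressions of those
   of P A Q + dA', its leaf blocks factor through P_j or Q_j, and
   A - B = (1 - P) (A - D) + P ((A - D) (1 - Q) - dA' Q), where the terms have orthogonal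
   ranges, resp. domains, and each leaf contributes eps^2 to the first two:
   ||A - B||^2 <= 2^p eps^2 + 2^p eps^2 + ||dA'||^2. *)

From HB Require Import structures.
From mathcomp Require Import all_boot all_order all_algebra.
From mathcomp Require Import zify.
Set Implicit Arguments. Unset Strict Implicit. Unset Printing Implicit Defensive.
Import Order.TTheory GRing.Theory Num.Theory.
Local Open Scope ring_scope.

Section OperatorBounds.
Variable C : numClosedFieldType.
Local Open Scope sesquilinear_scope.
Implicit Types (m q r : nat).

Lemma trmxC_mul m q r (M : 'M[C]_(m, q)) (N : 'M[C]_(q, r)) :
  (M *m N)^t* = N^t* *m M^t*.
Proof. by rewrite trmx_mul map_mxM. Qed.

Lemma trmxCD m q (M N : 'M[C]_(m, q)) : (M + N)^t* = M^t* + N^t*.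
Proof. by rewrite linearD /= map_mxD. Qed.

Lemma trmxCN m q (M : 'M[C]_(m, q)) : (- M)^t* = - M^t*.
Proof. by rewrite linearN /= map_mxN. Qed.

Lemma trmxCB m q (M N : 'M[C]_(m, q)) : (M - N)^t* = M^t* - N^t*.
Proof. by rewrite trmxCD trmxCN. Qed.

Lemma trmxC1 m : (1%:M : 'M[C]_m)^t* = 1%:M.
Proof. by apply/matrixP => i j; rewrite !mxE eq_sym; case: eqP; rewrite ?conjC1 ?conjC0. Qed.

Lemma trmxC_sum m q N (F : 'I_N -> 'M[C]_(m, q)) : (\sum_j F j)^t* = \sum_j (F j)^t*.
Proof.
by apply/matrixP => i j; rewrite !mxE !summxE rmorph_sum; apply: eq_bigr => l _; rewrite !mxE.
Qed.

Definition sqnorm m (x : 'cV[C]_m) : C := dotmx x^T x^T.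

Lemma dotmx_trmx m (x y : 'cV[C]_m) : dotmx x^T y^T = (y^t* *m x) 0 0.
Proof. by rewrite dotmxE !mxE; apply: eq_bigr => i _; rewrite !mxE mulrC. Qed.

Lemma sqnormE m (x : 'cV[C]_m) : sqnorm x = \sum_i `|x i 0| ^+ 2.
Proof. by rewrite /sqnorm dotmx_trmx mxE; apply: eq_bigr => i _; rewrite !mxE normCKC. Qed.

Lemma sqnorm_ge0 m (x : 'cV[C]_m) : 0 <= sqnorm x.
Proof. exact: dnorm_ge0. Qed.

Definition orthoproj m (P : 'M[C]_m) := P^t* = P /\ P *m P = P.

Lemma orthoprojC m (P : 'M[C]_m) : orthoproj P -> orthoproj (1%:M - P).
Proof.
case=> PC PP; split; first by rewrite trmxCB trmxC1 PC.
by rewrite mulmxBl mul1mx mulmxBr mulmx1 PP subrr subr0.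
Qed.

Lemma sqnorm_orthoprojD m (P : 'M[C]_m) (u w : 'cV[C]_m) : orthoproj P ->
  sqnorm (P *m u + (1%:M - P) *m w) = sqnorm (P *m u) + sqnorm ((1%:M - P) *m w).
Proof.
case=> PC PP; rewrite /sqnorm linearD /=; apply: hnormDd.
apply: etrans (dotmx_trmx _ _) _; rewrite trmxC_mul trmxCB trmxC1 PC mulmxA -(mulmxA _ _ P).
by rewrite mulmxBl mul1mx PP subrr mulmx0 mul0mx mxE.
Qed.

Lemma sqnorm_orthoproj_split m (P : 'M[C]_m) (x : 'cV[C]_m) : orthoproj P ->
  sqnorm x = sqnorm (P *m x) + sqnorm ((1%:M - P) *m x).
Proof. by move=> oP; rewrite -sqnorm_orthoprojD // mulmxBl mul1mx addrC subrK. Qed.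

Lemma sqnorm_orthoproj_le m (P : 'M[C]_m) (x : 'cV[C]_m) : orthoproj P ->
  sqnorm (P *m x) <= sqnorm x.
Proof. by move=> oP; rewrite [leRHS](sqnorm_orthoproj_split x oP) lerDl sqnorm_ge0. Qed.

Definition opnorm2_le m q (M : 'M[C]_(m, q)) (c : C) :=
  forall x, sqnorm (M *m x) <= c * sqnorm x.

Lemma spec_norm_leP m q (M : 'M[C]_(m, q)) e :
  spec_norm_le M e <-> 0 <= e /\ opnorm2_le M (e ^+ 2).
Proof. by split=> -[e0 hM]; split=> // x; rewrite ?sqnormE; [apply: hM | rewrite -!sqnormE]. Qed.

Lemma opnorm2_le_trans m q (M : 'M[C]_(m, q)) c c' :
  c <= c' -> opnorm2_le M c -> opnorm2_le M c'.
Proof. by move=> cc' hM x; apply: le_trans (hM x) _; rewrite ler_wpM2r ?sqnorm_ge0. Qed.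

Lemma opnorm2_le0 m q c : 0 <= c -> opnorm2_le (0 : 'M[C]_(m, q)) c.
Proof.
move=> c0 x; rewrite mul0mx (_ : sqnorm 0 = 0) ?mulr_ge0 ?sqnorm_ge0 //.
by apply/eqP; rewrite /sqnorm dnorm_eq0 trmx0.
Qed.

Lemma opnorm2_leN m q (M : 'M[C]_(m, q)) c : opnorm2_le M c -> opnorm2_le (- M) c.
Proof. by move=> hM x; rewrite mulNmx /sqnorm linearN /= hnormN; apply: hM. Qed.

Lemma opnorm2_leM m q r (M : 'M[C]_(m, q)) (N : 'M[C]_(q, r)) a b :
  0 <= a -> opnorm2_le M a -> opnorm2_le N b -> opnorm2_le (M *m N) (a * b).
Proof.
move=> a0 hM hN x; rewrite -mulmxA -mulrA.
exact: le_trans (hM _) (ler_wpM2l a0 (hN x)).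
Qed.

Lemma opnorm2_le_orthoproj m (P : 'M[C]_m) : orthoproj P -> opnorm2_le P 1.
Proof. by move=> oP x; rewrite mul1r sqnorm_orthoproj_le. Qed.

Lemma opnorm2_le_compress m q (P : 'M[C]_m) (M : 'M[C]_(m, q)) (Q : 'M[C]_q) c :
  orthoproj P -> orthoproj Q -> 0 <= c -> opnorm2_le M c -> opnorm2_le (P *m M *m Q) c.
Proof.
move=> oP oQ c0 hM x; rewrite -!mulmxA; apply: le_trans (sqnorm_orthoproj_le _ oP) _.
by apply: le_trans (hM _) _; rewrite ler_wpM2l ?sqnorm_orthoproj_le.
Qed.

(* Cauchy-Schwarz: [sqnorm (M^* y)^2 = |<M M^* y, y>|^2 <= c sqnorm (M^* y) sqnorm y]. *)
Lemma opnorm2_le_adj m q (M : 'M[C]_(m, q)) c :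
  0 <= c -> opnorm2_le M c -> opnorm2_le (M^t*) c.
Proof.
move=> c0 hM y; set w := M^t* *m y.
have w_dot : sqnorm w = dotmx (M *m w)^T y^T by rewrite /sqnorm !dotmx_trmx trmxC_mul trmxCK mulmxA.
have w_sq : sqnorm w ^+ 2 <= c * sqnorm w * sqnorm y.
  have -> : sqnorm w ^+ 2 = `|dotmx (M *m w)^T y^T| ^+ 2 by rewrite -w_dot ger0_norm ?sqnorm_ge0.
  apply: le_trans (CauchySchwarz (dotmx (n:=m)) (M *m w)^T y^T).1 _.
  by rewrite ler_wpM2r ?sqnorm_ge0 ?hM.
have [->|w_neq0] := eqVneq (sqnorm w) 0; first by rewrite mulr_ge0 ?sqnorm_ge0.
have w_gt0 : 0 < sqnorm w by rewrite lt_def w_neq0 sqnorm_ge0.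
by rewrite -(ler_pM2r w_gt0) -expr2 mulrAC.
Qed.

Lemma opnorm2_le_orthoprojDl m q (P : 'M[C]_m) (M N : 'M[C]_(m, q)) a b :
  orthoproj P -> opnorm2_le (P *m M) a -> opnorm2_le ((1%:M - P) *m N) b ->
  opnorm2_le (P *m M + (1%:M - P) *m N) (a + b).
Proof.
move=> oP hM hN x; rewrite mulmxDl -!mulmxA sqnorm_orthoprojD // mulrDl.
by apply: lerD; rewrite mulmxA; [apply: hM | apply: hN].
Qed.

Lemma opnorm2_le_orthoprojDr m q (Q : 'M[C]_q) (M N : 'M[C]_(m, q)) a b :
  orthoproj Q -> 0 <= a -> 0 <= b ->
  opnorm2_le (M *m Q) a -> opnorm2_le (N *m (1%:M - Q)) b ->
  opnorm2_le (M *m Q + N *m (1%:M - Q)) (a + b).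
Proof.
move=> oQ a0 b0 hM hN; rewrite -[_ + _]trmxCK; apply: opnorm2_le_adj; first exact: addr_ge0.
have [QC _] := oQ; have [QC' _] := orthoprojC oQ.
rewrite trmxCD !trmxC_mul QC QC'; apply: opnorm2_le_orthoprojDl => //.
  by rewrite -QC -trmxC_mul; apply: opnorm2_le_adj.
by rewrite -QC' -trmxC_mul; apply: opnorm2_le_adj.
Qed.

Lemma opnorm2_le_compress_defect m q (P : 'M[C]_m) (Q : 'M[C]_q) (Y D : 'M[C]_(m, q)) a b c :
  orthoproj P -> orthoproj Q -> 0 <= b -> 0 <= c ->
  opnorm2_le ((1%:M - P) *m Y) a -> opnorm2_le (Y *m (1%:M - Q)) b -> opnorm2_le D c ->
  opnorm2_le (Y - P *m (Y + D) *m Q) (a + b + c).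
Proof.
move=> oP oQ b0 c0 hPY hYQ hD.
have -> : Y - P *m (Y + D) *m Q = P *m ((- D) *m Q + Y *m (1%:M - Q)) + (1%:M - P) *m Y.
  rewrite mulmxDr mulmxBr mulmx1 !mulmxBl !mul1mx mulNmx mulmxN !mulmxA mulmxDr mulmxDl mulmxBr.
  by rewrite addrACA [_ - _ - P *m Y]addrAC subrr add0r [- _ + Y]addrC opprD addrA mulmxA addrAC.
apply: (opnorm2_le_trans (c := 1 * (c + b) + a)); first by rewrite mul1r addrC addrA addrAC.
apply: opnorm2_le_orthoprojDl hPY => //.
apply: opnorm2_leM (opnorm2_le_orthoproj oP) _; first exact: ler01.
apply: opnorm2_le_orthoprojDr => //.
by rewrite -[c]mulr1; apply: opnorm2_leM (opnorm2_leN hD) (opnorm2_le_orthoproj oQ).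
Qed.

Lemma colspace_orthoproj m q (Z : 'M[C]_(m, q)) :
  exists P : 'M[C]_m, [/\ orthoproj P, (\rank P <= \rank Z)%N, P *m Z = Z
    & exists W, P = Z *m W].
Proof.
set U := schmidt (row_base Z^T).
have U_unitary : U \is unitarymx by apply: schmidt_unitarymx; rewrite rank_leq_col.
have eqU : (U :=: Z^T)%MS.
  exact: eqmx_trans (eqmx_schmidt_free (row_base_free _)) (eq_row_base _).
have UU : (U^T)^t* *m U^T = 1%:M.
  have /(congr1 trmx) := unitarymxP U_unitary; rewrite trmx_mul trmx1 => <-.
  by congr (_ *m _); apply/matrixP => i j; rewrite !mxE.
exists (U^T *m (U^T)^t*); split.
- by split; rewrite ?trmxC_mul ?trmxCK // mulmxA -(mulmxA U^T) UU mulmx1.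
- by rewrite (leq_trans (mxrankM_maxl _ _)) // mxrank_tr eqU mxrank_tr.
- have /submxP [D ZD] : (Z^T <= U)%MS by rewrite eqU.
  have eZ : Z = U^T *m D^T by rewrite -trmx_mul -ZD trmxK.
  transitivity (U^T *m (U^T)^t* *m (U^T *m D^T)); first by rewrite -eZ.
  by rewrite mulmxA -(mulmxA U^T) UU mulmx1 -eZ.
- have /submxP [D UD] : (U <= Z^T)%MS by rewrite eqU.
  by exists (D^T *m (U^T)^t*); rewrite UD trmx_mul trmxK mulmxA.
Qed.

Lemma exists_orthoproj_approx m q (E : 'M[C]_m) (Y Z : 'M[C]_(m, q)) k c :
  orthoproj E -> E *m Z = Z -> (\rank Z <= k)%N -> opnorm2_le (Y - Z) c ->
  exists P : 'M[C]_m, [/\ orthoproj P, (\rank P <= k)%N, E *m P = P,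
     P *m E = P & opnorm2_le ((1%:M - P) *m Y) c].
Proof.
move=> [EC _] EZ rkZ hYZ; have [P [oP rkP PZ [W PZW]]] := colspace_orthoproj Z.
have EP : E *m P = P by rewrite PZW mulmxA EZ.
exists P; split => //; first exact: leq_trans rkZ.
  by rewrite -[P in LHS](proj1 oP) -EC -trmxC_mul EP (proj1 oP).
have -> : (1%:M - P) *m Y = (1%:M - P) *m (Y - Z).
  by rewrite [RHS]mulmxBr (mulmxBl 1%:M P Z) mul1mx PZ subrr subr0.
by rewrite -[c]mul1r; apply: opnorm2_leM (opnorm2_le_orthoproj (orthoprojC oP)) hYZ.
Qed.

Lemma eps_rank_le_adj m q (Y : 'M[C]_(m, q)) k e :
  eps_rank_le Y k e -> eps_rank_le (Y^t*) k e.
Proof.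
case=> Z [rkZ /spec_norm_leP [e0 hZ]]; exists (Z^t*); split.
  by rewrite mxrank_map mxrank_tr.
by apply/spec_norm_leP; split; rewrite // -trmxCB; apply: opnorm2_le_adj; rewrite ?exprn_ge0.
Qed.

End OperatorBounds.

Lemma mxrank_sandwich (F : fieldType) m q r s (X : 'M[F]_(m, q)) (Y : 'M[F]_(q, r))
  (Z : 'M[F]_(r, s)) : (\rank (X *m Y *m Z) <= \rank Y)%N.
Proof. exact: leq_trans (mxrankM_maxl _ _) (mxrankM_maxr _ _). Qed.

Section BlockMasks.
Variables (C : numClosedFieldType) (n : nat).
Local Open Scope sesquilinear_scope.
Implicit Types (S T : {set 'I_n}) (M : 'M[C]_n).

Definition selmx S : 'M[C]_(#|S|, n) := rowsub enum_val 1%:M.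
Definition maskmx S : 'M[C]_n := diag_mx (\row_x (x \in S)%:R).
Definition subblock S T M : 'M[C]_(#|S|, #|T|) := selmx S *m M *m (selmx T)^T.

Lemma selmx_mulE S q (N : 'M[C]_(n, q)) i y : (selmx S *m N) i y = N (enum_val i) y.
Proof. by rewrite mul_rowsub_mx mul1mx mxE. Qed.

Lemma mul_selmxTE S q (N : 'M[C]_(q, n)) x j : (N *m (selmx S)^T) x j = N x (enum_val j).
Proof. by rewrite trmx_mxsub trmx1 mulmx_colsub mulmx1 mxE. Qed.

Lemma subblockE S T M i j : subblock S T M i j = M (enum_val i) (enum_val j).
Proof. by rewrite mul_selmxTE selmx_mulE. Qed.

Lemma block_rowE M S : block_row M S = subblock S (~: S) M.
Proof. by apply/matrixP => i j; rewrite subblockE mxE. Qed.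

Lemma block_colE M S : block_col M S = subblock (~: S) S M.
Proof. by apply/matrixP => i j; rewrite subblockE mxE. Qed.

Lemma block_row_adj M S : block_row (M^t*) S = (block_col M S)^t*.
Proof. by apply/matrixP => i j; rewrite !mxE. Qed.

Lemma maskmxE S x y : maskmx S x y = ((x \in S) && (x == y))%:R.
Proof. by rewrite !mxE; case: (x \in S); case: (x == y). Qed.

Lemma selmx_selmxT S : selmx S *m (selmx S)^T = 1%:M.
Proof. by apply/matrixP => i j; rewrite selmx_mulE !mxE (inj_eq enum_val_inj) eq_sym. Qed.

Lemma selmxT_selmx S : (selmx S)^T *m selmx S = maskmx S.
Proof.
apply/matrixP => x y; rewrite maskmxE mxE.
have [xS|xNS] := boolP (x \in S); last first.
  rewrite big1 // => i _; rewrite !mxE.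
  have /negbTE -> : enum_val i != x by apply: contraNneq xNS => <-; apply: enum_valP.
  by rewrite mul0r.
rewrite (bigD1 (enum_rank_in xS x)) //= !mxE enum_rankK_in // eqxx mul1r.
rewrite big1 ?addr0 // => i ix; rewrite !mxE.
have /negbTE -> : enum_val i != x.
  by apply: contraNneq ix => ix; apply/eqP/enum_val_inj; rewrite enum_rankK_in.
by rewrite mul0r.
Qed.

Lemma selmx_maskmx S : selmx S *m maskmx S = selmx S.
Proof. by rewrite -selmxT_selmx mulmxA selmx_selmxT mul1mx. Qed.

Lemma maskmx_selmxT S : maskmx S *m (selmx S)^T = (selmx S)^T.
Proof. by rewrite -selmxT_selmx -mulmxA selmx_selmxT mulmx1. Qed.

Lemma maskmxM S T : maskmx S *m maskmx T = maskmx (S :&: T).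
Proof.
apply/matrixP => x y; rewrite mul_diag_mx !mxE inE.
by case: (x \in S); case: (x \in T); case: (x == y); rewrite ?mul1r ?mul0r.
Qed.

Lemma maskmx_orthoproj S : orthoproj (maskmx S).
Proof.
split; last by rewrite maskmxM setIid.
apply/matrixP => x y; rewrite mxE mxE !maskmxE.
have [->|_] := eqVneq x y; last by rewrite !andbF conjC0.
by case: (y \in S); rewrite /= ?conjC1 ?conjC0.
Qed.

Lemma maskmxC S : maskmx (~: S) = 1%:M - maskmx S.
Proof.
apply/matrixP => x y; rewrite !mxE inE.
by case: (x \in S); case: (x == y); rewrite /= ?subrr ?subr0.
Qed.

Lemma maskmx0 : maskmx set0 = 0.
Proof. by apply/matrixP => x y; rewrite maskmxE inE mxE. Qed.

Lemma maskmx_subblock S T M :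
  maskmx S *m M *m maskmx T = (selmx S)^T *m subblock S T M *m selmx T.
Proof. by rewrite /subblock !mulmxA selmxT_selmx -!mulmxA selmxT_selmx. Qed.

Lemma subblock_maskmx S T M : subblock S T (maskmx S *m M *m maskmx T) = subblock S T M.
Proof. by rewrite /subblock !mulmxA selmx_maskmx -!mulmxA maskmx_selmxT. Qed.

Lemma mxrank_subblock S T M : \rank (subblock S T M) = \rank (maskmx S *m M *m maskmx T).
Proof.
apply/eqP; rewrite eqn_leq -{1}subblock_maskmx mxrank_sandwich.
by rewrite maskmx_subblock mxrank_sandwich.
Qed.

Lemma sqnorm_selmxT S (v : 'cV[C]_#|S|) : sqnorm ((selmx S)^T *m v) = sqnorm v.
Proof.
rewrite /sqnorm !dotmx_trmx trmxC_mul mulmxA -(mulmxA _ _ (selmx S)^T).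
have -> : ((selmx S)^T)^t* = selmx S.
  by apply/matrixP => i x; rewrite !mxE; case: eqP; rewrite ?conjC1 ?conjC0.
by rewrite selmx_selmxT mulmx1.
Qed.

Lemma sqnorm_selmx_le S (x : 'cV[C]_n) : sqnorm (selmx S *m x) <= sqnorm x.
Proof.
rewrite -sqnorm_selmxT mulmxA selmxT_selmx.
exact: sqnorm_orthoproj_le (maskmx_orthoproj S).
Qed.

Lemma opnorm2_le_expand S T (W : 'M[C]_(#|S|, #|T|)) c : 0 <= c ->
  opnorm2_le W c -> opnorm2_le ((selmx S)^T *m W *m selmx T) c.
Proof.
move=> c0 hW x; rewrite -!mulmxA sqnorm_selmxT; apply: le_trans (hW _) _.
by rewrite ler_wpM2l // sqnorm_selmx_le.
Qed.

Lemma opnorm2_le_subblock S T M c : 0 <= c ->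
  opnorm2_le M c -> opnorm2_le (subblock S T M) c.
Proof.
move=> c0 hM x; rewrite -!mulmxA; apply: le_trans (sqnorm_selmx_le _ _) _.
by apply: le_trans (hM _) _; rewrite sqnorm_selmxT.
Qed.

Lemma eps_rank_le_subblockP S T M k e :
  eps_rank_le (subblock S T M) k e <->
  0 <= e /\ exists Z, [/\ (\rank Z <= k)%N, maskmx S *m Z *m maskmx T = Z
                        & opnorm2_le (maskmx S *m M *m maskmx T - Z) (e ^+ 2)].
Proof.
have e2_ge0 x : 0 <= x -> 0 <= x ^+ 2 :> C by move=> x0; rewrite exprn_ge0.
split=> [[Z [rkZ /spec_norm_leP [e0 hZ]]] | [e0 [Z [rkZ suppZ hZ]]]].
  split=> //; exists ((selmx S)^T *m Z *m selmx T); split.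
  - exact: leq_trans (mxrank_sandwich _ _ _) rkZ.
  - by rewrite !mulmxA maskmx_selmxT -!mulmxA selmx_maskmx.
  by rewrite maskmx_subblock -mulmxBl -mulmxBr; apply: opnorm2_le_expand; rewrite ?e2_ge0.
exists (subblock S T Z); split.
  by rewrite mxrank_subblock suppZ.
apply/spec_norm_leP; split => //.
rewrite -subblock_maskmx /subblock -mulmxBl -mulmxBr.
by apply: opnorm2_le_subblock; rewrite ?e2_ge0.
Qed.

Lemma block_row_orthoproj M S k e : eps_rank_le (block_row M S) k e ->
  exists P, [/\ orthoproj P, (\rank P <= k)%N, maskmx S *m P = P, P *m maskmx S = P
    & opnorm2_le ((1%:M - P) *m (maskmx S *m M *m maskmx (~: S))) (e ^+ 2)].
Proof.
rewrite block_rowE => /eps_rank_le_subblockP [_ [Z [rkZ suppZ hZ]]].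
apply: exists_orthoproj_approx (maskmx_orthoproj S) _ rkZ hZ.
by rewrite -suppZ !mulmxA maskmxM setIid.
Qed.

Lemma maskmxC_comm S P : maskmx S *m P = P *m maskmx S ->
  maskmx (~: S) *m P = P *m maskmx (~: S).
Proof. by move=> SP; rewrite maskmxC mulmxBl mulmxBr mul1mx mulmx1 SP. Qed.

Lemma eps_rank_le_subblock_compress S T M P Q k e :
  orthoproj P -> orthoproj Q ->
  maskmx S *m P = P *m maskmx S -> maskmx T *m Q = Q *m maskmx T ->
  eps_rank_le (subblock S T M) k e -> eps_rank_le (subblock S T (P *m M *m Q)) k e.
Proof.
move=> oP oQ SP TQ /eps_rank_le_subblockP [e0 [Z [rkZ suppZ hZ]]].
have mask_compress X :
    maskmx S *m (P *m X *m Q) *m maskmx T = P *m (maskmx S *m X *m maskmx T) *m Q.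
  by rewrite !mulmxA SP -!mulmxA TQ.
apply/eps_rank_le_subblockP; split => //; exists (P *m Z *m Q); split.
- exact: leq_trans (mxrank_sandwich _ _ _) rkZ.
- by rewrite mask_compress suppZ.
rewrite mask_compress -mulmxBl -mulmxBr.
by apply: opnorm2_le_compress; rewrite ?exprn_ge0.
Qed.

End BlockMasks.
Arguments selmx {C n} S.
Arguments maskmx {C n} S.

Section Families.
Variables (C : numClosedFieldType) (n : nat).
Implicit Types (F : {set 'I_n} -> Prop) (M : 'M[C]_n).

Definition family_eps_rank_le F k (e : C) M := forall S, F S ->
  eps_rank_le (block_row M S) k e /\ eps_rank_le (block_col M S) k e.

Definition family_rank_le F k M := forall S, F S ->
  (\rank (block_row M S) <= k)%N /\ (\rank (block_col M S) <= k)%N.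

Lemma family_eps_rank_le_sub F G k e M :
  (forall S, G S -> F S) -> family_eps_rank_le F k e M -> family_eps_rank_le G k e M.
Proof. by move=> GF hM S /GF /hM. Qed.

Lemma family_rank_le_sub F G k M :
  (forall S, G S -> F S) -> family_rank_le F k M -> family_rank_le G k M.
Proof. by move=> GF hM S /GF /hM. Qed.

Lemma family_eps_rank_le_compress F k e M P Q :
  orthoproj P -> orthoproj Q ->
  (forall S, F S -> maskmx S *m P = P *m maskmx S /\ maskmx S *m Q = Q *m maskmx S) ->
  family_eps_rank_le F k e M -> family_eps_rank_le F k e (P *m M *m Q).
Proof.
move=> oP oQ comm hM S FS; have [SP SQ] := comm S FS.
have [SP' SQ'] := (maskmxC_comm SP, maskmxC_comm SQ).
rewrite !block_rowE !block_colE; have [] := hM S FS; rewrite block_rowE block_colE.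
by split; apply: eps_rank_le_subblock_compress.
Qed.

End Families.

Section LeafPartition.
Variables (C : numClosedFieldType) (n N : nat).
Local Open Scope sesquilinear_scope.
Variables (leaf : 'I_N -> {set 'I_n}) (leaf_of : 'I_n -> 'I_N).
Hypothesis mem_leaf : forall x j, (x \in leaf j) = (leaf_of x == j).
Implicit Types (D E : {set 'I_n}) (M : 'M[C]_n).

Definition saturated D := forall x y, leaf_of x = leaf_of y -> (x \in D) = (y \in D).

Lemma saturated_leaf j : saturated (leaf j).
Proof. by move=> x y xy; rewrite !mem_leaf xy. Qed.

Lemma saturatedC D : saturated D -> saturated (~: D).
Proof. by move=> satD x y xy; rewrite !inE (satD x y xy). Qed.

Lemma leafI_saturated D j : saturated D -> leaf j :&: D = leaf j \/ leaf j :&: D = set0.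
Proof.
move=> satD; have [->|[x xjD]] := set_0Vmem (leaf j :&: D); [by right | left].
move: xjD; rewrite inE => /andP [xj xD]; apply/setIidPl/subsetP => y yj.
by rewrite -(satD x) //; move: xj yj; rewrite !mem_leaf => /eqP -> /eqP ->.
Qed.

Lemma maskmx_leafM j j' : j != j' -> maskmx (leaf j) *m maskmx (leaf j') = 0 :> 'M[C]_n.
Proof.
move=> jj'; rewrite maskmxM -maskmx0; congr maskmx; apply/setP => x.
by rewrite !inE !mem_leaf; apply/negbTE; apply: contra jj' => /andP [/eqP <- /eqP <-].
Qed.

Lemma sum_maskmx_leaf : \sum_j maskmx (leaf j) = 1%:M :> 'M[C]_n.
Proof.
apply/matrixP => x y; rewrite summxE (bigD1 (leaf_of x)) //= big1 => [|j xj].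
  by rewrite addr0 maskmxE mem_leaf eqxx !mxE.
by rewrite maskmxE mem_leaf eq_sym (negbTE xj).
Qed.

Definition blkdiag M : 'M[C]_n := \sum_j maskmx (leaf j) *m M *m maskmx (leaf j).

Lemma maskmx_blkdiag D E M : saturated D -> D :&: E = set0 ->
  maskmx D *m blkdiag M *m maskmx E = 0.
Proof.
move=> satD DE; rewrite mulmx_sumr mulmx_suml big1 // => j _.
case: (leafI_saturated j satD) => jD.
  by rewrite -!mulmxA maskmxM -jD -setIA DE setI0 maskmx0 !mulmx0.
by rewrite !mulmxA maskmxM setIC jD maskmx0 !mul0mx.
Qed.

Lemma maskmx_leaf_offdiag j M :
  maskmx (leaf j) *m (M - blkdiag M) = maskmx (leaf j) *m M *m maskmx (~: leaf j).
Proof.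
rewrite mulmxBr mulmx_sumr (bigD1 j) //= big1 => [|j' j'j]; last first.
  by rewrite !mulmxA maskmx_leafM 1?eq_sym // !mul0mx.
by rewrite addr0 !mulmxA maskmxM setIid maskmxC mulmxBr mulmx1.
Qed.

Lemma blkdiag_adj M : (blkdiag M)^t* = blkdiag (M^t*).
Proof.
rewrite trmxC_sum; apply: eq_bigr => j _.
by rewrite !trmxC_mul (proj1 (maskmx_orthoproj _ _)) mulmxA.
Qed.

Lemma sqnorm_leaf_sum (v : 'cV[C]_n) : sqnorm v = \sum_j sqnorm (maskmx (leaf j) *m v).
Proof.
transitivity (\sum_j (v^t* *m maskmx (leaf j) *m v) 0 0).
  by rewrite -summxE -mulmx_suml -mulmx_sumr sum_maskmx_leaf mulmx1 /sqnorm dotmx_trmx.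
apply: eq_bigr => j _; have [mC mm] := maskmx_orthoproj C (leaf j).
by rewrite /sqnorm dotmx_trmx trmxC_mul mC !mulmxA -(mulmxA _ _ (maskmx _)) mm.
Qed.

Definition leafwise (Pi : 'I_N -> 'M[C]_n) := forall j,
  [/\ orthoproj (Pi j), maskmx (leaf j) *m Pi j = Pi j & Pi j *m maskmx (leaf j) = Pi j].

Section LeafwiseSum.
Variables (Pi : 'I_N -> 'M[C]_n).
Hypothesis Pi_leafwise : leafwise Pi.
Let P := \sum_j Pi j.

Lemma maskmx_leafwise_sum j : maskmx (leaf j) *m P = Pi j.
Proof.
rewrite mulmx_sumr (bigD1 j) //= big1 => [|j' j'j].
  by have [_ -> _] := Pi_leafwise j; rewrite addr0.
by have [_ <- _] := Pi_leafwise j'; rewrite mulmxA maskmx_leafM 1?eq_sym // mul0mx.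
Qed.

Lemma leafwise_sum_maskmx j : P *m maskmx (leaf j) = Pi j.
Proof.
rewrite mulmx_suml (bigD1 j) //= big1 => [|j' j'j].
  by have [_ _ ->] := Pi_leafwise j; rewrite addr0.
by have [_ _ <-] := Pi_leafwise j'; rewrite -mulmxA maskmx_leafM // mulmx0.
Qed.

Lemma leafwise_sum_orthoproj : orthoproj P.
Proof.
split; first by rewrite trmxC_sum; apply: eq_bigr => j _; have [[-> _] _ _] := Pi_leafwise j.
rewrite mulmx_suml; apply: eq_bigr => j _; have [[_ PP] _ Pj] := Pi_leafwise j.
by rewrite -{1}Pj -mulmxA maskmx_leafwise_sum PP.
Qed.

Lemma leafwise_sum_comm D : saturated D -> maskmx D *m P = P *m maskmx D.
Proof.
move=> satD; rewrite mulmx_sumr mulmx_suml; apply: eq_bigr => j _.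
have [_ jP Pj] := Pi_leafwise j.
rewrite -{1}jP -{2}Pj mulmxA maskmxM -[RHS]mulmxA maskmxM setIC.
by case: (leafI_saturated j satD) => ->; rewrite ?maskmx0 ?mulmx0 ?mul0mx ?jP ?Pj.
Qed.

(* Leaf [j] of [(1 - P) (M - blkdiag M)] is [(1 - Pi j) M(leaf j, ~ leaf j)], so the
   squared norms add up over the [N] leaves. *)
Lemma opnorm2_le_offdiag M c :
  (forall j, opnorm2_le ((1%:M - Pi j) *m (maskmx (leaf j) *m M *m maskmx (~: leaf j))) c) ->
  opnorm2_le ((1%:M - P) *m (M - blkdiag M)) (N%:R * c).
Proof.
move=> hM x; rewrite sqnorm_leaf_sum.
apply: (@le_trans _ _ (\sum_(j < N) c * sqnorm x)).
  2: by rewrite sumr_const card_ord -mulrA mulr_natl.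
apply: ler_sum => j _; apply: le_trans (hM j x); have [_ _ Pj] := Pi_leafwise j.
rewrite -maskmx_leaf_offdiag !mulmxA mulmxBl mul1mx Pj.
by rewrite (mulmxBr (maskmx _)) mulmx1 maskmx_leafwise_sum.
Qed.

End LeafwiseSum.

Lemma exists_leafwise_orthoproj M k e :
  (forall j, eps_rank_le (block_row M (leaf j)) k e) ->
  exists Pi, [/\ leafwise Pi, forall j, (\rank (Pi j) <= k)%N
    & opnorm2_le ((1%:M - \sum_j Pi j) *m (M - blkdiag M)) (N%:R * e ^+ 2)].
Proof.
move=> hM; have [Pi hPi] := fin_all_exists (fun j => block_row_orthoproj (hM j)).
have Pi_leafwise : leafwise Pi by move=> j; have [] := hPi j.
exists Pi; split=> // [j|]; first by have [] := hPi j.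
by apply: opnorm2_le_offdiag => // j; have [] := hPi j.
Qed.

Lemma maskmx_correction D E M dM P Q : saturated D -> D :&: E = set0 ->
  P *m P = P -> Q *m Q = Q -> maskmx D *m P = P *m maskmx D -> maskmx E *m Q = Q *m maskmx E ->
  maskmx D *m (blkdiag M + P *m (M - blkdiag M + dM) *m Q) *m maskmx E =
  P *m (maskmx D *m (P *m M *m Q + dM) *m maskmx E) *m Q.
Proof.
move=> satD DE PP QQ DP EQ.
have compress X : maskmx D *m (P *m X *m Q) *m maskmx E = P *m (maskmx D *m X *m maskmx E) *m Q.
  by rewrite !mulmxA DP -!mulmxA EQ.
rewrite [in LHS]mulmxDr [in LHS]mulmxDl maskmx_blkdiag // add0r compress.
have -> : maskmx D *m (M - blkdiag M + dM) *m maskmx E =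
    maskmx D *m M *m maskmx E + maskmx D *m dM *m maskmx E.
  by rewrite !mulmxDr !mulmxDl mulmxN mulNmx maskmx_blkdiag // oppr0 addr0.
rewrite [in RHS]mulmxDr [in RHS]mulmxDl compress.
by rewrite !mulmxDr !mulmxDl !mulmxA PP -!mulmxA QQ.
Qed.

Lemma family_rank_le_correction (F : {set 'I_n} -> Prop) k (A dA : 'M[C]_n) Pi Qi :
  leafwise Pi -> leafwise Qi ->
  (forall j, (\rank (Pi j) <= k)%N) -> (forall j, (\rank (Qi j) <= k)%N) ->
  (forall D, F D -> saturated D) ->
  family_rank_le F k ((\sum_j Pi j) *m A *m (\sum_j Qi j) + dA) ->
  family_rank_le (fun S => F S \/ exists j, S = leaf j) k
    (blkdiag A + (\sum_j Pi j) *m (A - blkdiag A + dA) *m (\sum_j Qi j)).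
Proof.
move=> lwP lwQ rkP rkQ satF rkA; set P := \sum_j Pi j; set Q := \sum_j Qi j.
have [[_ PP] [_ QQ]] := (leafwise_sum_orthoproj lwP, leafwise_sum_orthoproj lwQ).
have blockB D E : saturated D -> saturated E -> D :&: E = set0 ->
    maskmx D *m (blkdiag A + P *m (A - blkdiag A + dA) *m Q) *m maskmx E =
    P *m (maskmx D *m (P *m A *m Q + dA) *m maskmx E) *m Q.
  move=> satD satE DE.
  by rewrite maskmx_correction // (leafwise_sum_comm lwP, leafwise_sum_comm lwQ).
move=> S [FS|[j ->]]; rewrite block_rowE block_colE !mxrank_subblock.
  have [satS satS'] := (satF S FS, saturatedC (satF S FS)).
  have [] := rkA S FS; rewrite block_rowE block_colE !mxrank_subblock => rk_row rk_col.
  rewrite !blockB ?setICr // 1?setIC ?setICr //.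
  by split; [apply: leq_trans rk_row | apply: leq_trans rk_col]; apply: mxrank_sandwich.
have [satj satj'] := (saturated_leaf j, saturatedC (saturated_leaf j)).
rewrite !blockB ?setICr // 1?setIC ?setICr //.
rewrite !mulmxA leafwise_sum_maskmx // -(mulmxA _ (maskmx (leaf j)) Q) maskmx_leafwise_sum //.
split; [apply: leq_trans (rkP j); rewrite -!mulmxA | apply: leq_trans (rkQ j)].
  exact: mxrankM_maxl.
exact: mxrankM_maxr.
Qed.

Lemma hss_correction_step (F : {set 'I_n} -> Prop) k (e c : C) (A : 'M[C]_n) :
  0 <= e -> 0 <= c -> (forall D, F D -> saturated D) ->
  (forall A', family_eps_rank_le F k e A' ->
     exists dA', opnorm2_le dA' c /\ family_rank_le F k (A' + dA')) ->
  family_eps_rank_le (fun S => F S \/ exists j, S = leaf j) k e A ->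
  exists dA, opnorm2_le dA (N%:R * e ^+ 2 + N%:R * e ^+ 2 + c) /\
    family_rank_le (fun S => F S \/ exists j, S = leaf j) k (A + dA).
Proof.
move=> e0 c0 satF IH hA.
have hleaf j := hA (leaf j) (or_intror (ex_intro _ j erefl)).
have [Pi [lwP rkP hP]] := exists_leafwise_orthoproj (fun j => (hleaf j).1).
have [Qi [lwQ rkQ hQ]] : exists Qi, [/\ leafwise Qi, forall j, (\rank (Qi j) <= k)%N
    & opnorm2_le ((1%:M - \sum_j Qi j) *m (A^t* - blkdiag (A^t*))) (N%:R * e ^+ 2)].
  apply: exists_leafwise_orthoproj => j.
  by rewrite block_row_adj; apply/eps_rank_le_adj/(hleaf j).2.
set P := \sum_j Pi j; set Q := \sum_j Qi j.
have [oP oQ] := (leafwise_sum_orthoproj lwP, leafwise_sum_orthoproj lwQ).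
have [dA' [hdA' rkA']] : exists dA', opnorm2_le dA' c /\ family_rank_le F k (P *m A *m Q + dA').
  apply/IH/family_eps_rank_le_compress => // [S FS|S FS]; last exact: hA (or_introl FS).
  by split; apply: leafwise_sum_comm => //; apply: satF.
exists (blkdiag A + P *m (A - blkdiag A + dA') *m Q - A); split; last first.
  by rewrite addrC subrK; apply: family_rank_le_correction.
have -> : blkdiag A + P *m (A - blkdiag A + dA') *m Q - A =
    - (A - blkdiag A - P *m (A - blkdiag A + dA') *m Q).
  by rewrite opprB opprD opprK addrAC [RHS]addrC [- A + _]addrC.
apply/opnorm2_leN/opnorm2_le_compress_defect => //; rewrite ?mulr_ge0 ?exprn_ge0 //.
rewrite -[_ *m _]trmxCK; apply: opnorm2_le_adj; first by rewrite mulr_ge0 ?exprn_ge0.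
by rewrite trmxC_mul !trmxCB trmxC1 blkdiag_adj (proj1 oQ).
Qed.

End LeafPartition.

Section ClusterTree.
Variables (n p : nat) (s : seq nat).
Hypothesis s_partition : cluster_partition n p s.
Local Open Scope nat_scope.
Local Notation offset := (leaf_offset s).

Lemma leaf_offset_mono m m' : m <= m' -> offset m <= offset m'.
Proof. by move=> mm'; rewrite /leaf_offset -(subnKC mm') takeD sumn_cat leq_addr. Qed.

Lemma leaf_offset_max m : 2 ^ p <= m -> offset m = n.
Proof. by case: s_partition => size_s _ sum_s pm; rewrite /leaf_offset take_oversize ?size_s. Qed.

Lemma exists_leaf (x : 'I_n) : exists m, x < offset m.+1.
Proof. by exists (2 ^ p); rewrite leaf_offset_max. Qed.

Definition leaf_index (x : 'I_n) := ex_minn (exists_leaf x).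

Lemma leaf_indexP (x : 'I_n) :
  [/\ offset (leaf_index x) <= x, x < offset (leaf_index x).+1 & leaf_index x < 2 ^ p].
Proof.
rewrite /leaf_index; case: ex_minnP => m xm m_min; split => //.
- case: m xm m_min => [|m] xm m_min; first by rewrite /leaf_offset take0.
  by rewrite leqNgt; apply/negP => /m_min; rewrite ltnn.
- have := m_min (2 ^ p).-1; rewrite prednK ?expn_gt0 // leaf_offset_max // ltn_ord.
  by move=> /(_ isT); rewrite -ltnS prednK ?expn_gt0.
Qed.

Lemma leq_leaf_offset (x : 'I_n) m : (offset m <= x) = (m <= leaf_index x).
Proof.
have [off_le lt_off _] := leaf_indexP x; apply/idP/idP => [le_x|]; last first.
  by move/leaf_offset_mono/leq_trans; apply.
rewrite leqNgt; apply/negP => /leaf_offset_mono le_off.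
by have := leq_trans (leq_trans lt_off le_off) le_x; rewrite ltnn.
Qed.

Definition cluster_index l (x : 'I_n) := leaf_index x %/ 2 ^ (p - l).

Lemma mem_cluster l i (x : 'I_n) : (x \in cluster n p s l i) = (cluster_index l x == i).
Proof.
have d_gt0 : 0 < 2 ^ (p - l) by rewrite expn_gt0.
rewrite inE leq_leaf_offset ltnNge leq_leaf_offset -ltnNge /cluster_index.
by rewrite eqn_leq (leq_divRL _ _ d_gt0) -[(_ %/ _ <= i)]ltnS (ltn_divLR _ _ d_gt0) andbC.
Qed.

Lemma cluster_index_lt l (x : 'I_n) : l <= p -> cluster_index l x < 2 ^ l.
Proof.
move=> lp; rewrite /cluster_index ltn_divLR ?expn_gt0 // -expnD subnKC //.
by case: (leaf_indexP x).
Qed.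

Lemma cluster_index_coarsen l l' (x y : 'I_n) : l <= l' -> l' <= p ->
  cluster_index l' x = cluster_index l' y -> cluster_index l x = cluster_index l y.
Proof.
move=> ll' l'p; rewrite /cluster_index.
have -> : p - l = (p - l') + (l' - l) by lia.
by rewrite expnD !divnMA => ->.
Qed.

End ClusterTree.

Definition clusters_upto n p s q (S : {set 'I_n}) :=
  exists l i, [/\ (1 <= l <= q)%N, (i < 2 ^ l)%N & S = cluster n p s l i].

Lemma clusters_uptoS n p s q (S : {set 'I_n}) : clusters_upto p s q.+1 S <->
  clusters_upto p s q S \/ exists j : 'I_(2 ^ q.+1), S = cluster n p s q.+1 j.
Proof.
split=> [[l [i [/andP [l_gt0 lq] il ->]]] | [[l [i [/andP [l_gt0 lq] il ->]]] | [j ->]]].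
- rewrite leq_eqVlt ltnS in lq; case/orP: lq => [/eqP lq | lq].
    by right; subst l; exists (Ordinal il).
  by left; exists l, i; rewrite l_gt0.
- by exists l, i; rewrite l_gt0 ltnW.
- by exists q.+1, j; rewrite leqnn ltn_ord.
Qed.

(* [2 ^ (q + 2) - 4 = sum_(1 <= l <= q) 2 * 2 ^ l]: two contributions per cluster of level l. *)
Lemma hss_correction_upto (C : numClosedFieldType) n p s k (e : C) :
  cluster_partition n p s -> 0 <= e -> forall q, (q <= p)%N ->
  forall A : 'M[C]_n, family_eps_rank_le (clusters_upto p s q) k e A ->
  exists dA, opnorm2_le dA ((2 ^ (q + 2) - 4)%N%:R * e ^+ 2) /\
    family_rank_le (clusters_upto p s q) k (A + dA).
Proof.
move=> s_part e0; elim=> [|q IHq] qp A hA.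
  exists 0; split; first by apply: opnorm2_le0; rewrite mulr_ge0 ?exprn_ge0.
  by move=> S [l [i [/andP [l_gt0 l0]]]]; have := leq_trans l_gt0 l0.
pose leaf_of (x : 'I_n) : 'I_(2 ^ q.+1) := Ordinal (cluster_index_lt s_part x qp).
have mem_leaf x (j : 'I_(2 ^ q.+1)) : (x \in cluster n p s q.+1 j) = (leaf_of x == j).
  by rewrite mem_cluster -val_eqE.
have sat_upto D : clusters_upto p s q D -> saturated leaf_of D.
  move=> [l [i [/andP [_ lq] _ ->]]] x y /(congr1 val) xy.
  by rewrite !mem_cluster (cluster_index_coarsen (l' := q.+1) _ _ xy) // ltnW.
have c_ge0 : 0 <= (2 ^ (q + 2) - 4)%N%:R * e ^+ 2 by rewrite mulr_ge0 ?exprn_ge0.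
have [|dA [hdA rkA]] := hss_correction_step mem_leaf e0 c_ge0 sat_upto (IHq (ltnW qp)) (A := A).
  by apply: family_eps_rank_le_sub hA => S /clusters_uptoS.
exists dA; split; last by apply: family_rank_le_sub rkA => S /clusters_uptoS.
apply: opnorm2_le_trans hdA; rewrite -!mulrDl -!natrD.
suff -> : (2 ^ q.+1 + 2 ^ q.+1 + (2 ^ (q + 2) - 4) = 2 ^ (q.+1 + 2) - 4)%N by [].
by have := expn_gt0 2 q; rewrite !expnD !expnS; lia.
Qed.

Theorem theorem3 (C : numClosedFieldType) (n p k : nat) (s : seq nat)
  (eps : C) (A : 'M[C]_n) :
  cluster_partition n p s -> 0 <= eps ->
  @is_eps_HSS C n p s k eps A ->
  exists dA : 'M[C]_n,
    spec_norm_le dA (sqrtC ((2 ^ (p + 2) - 4)%N)%:R * eps) /\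
    @is_HSS C n p s k (A + dA).
Proof.
move=> s_part eps_ge0 hA.
have hA' : family_eps_rank_le (clusters_upto p s p) k eps A.
  by move=> S [l [i [lp il ->]]]; apply: hA.
have [dA [hdA rkA]] := hss_correction_upto s_part eps_ge0 (leqnn p) hA'.
exists dA; split; last by move=> l i lp il; apply: rkA; exists l, i.
apply/spec_norm_leP; split; first by rewrite mulr_ge0 ?sqrtC_ge0 ?ler0n.
by rewrite exprMn sqrtCK.
Qed.
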